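(* Let $F_1,\dots,F_n:\mathbb{R}^d\to\mathbb{R}^d$ with each $F_i$ being $L_i$-Lipschitz, let $F=\frac1n\sum_{i=1}^nF_i$, and let $x^*$ satisfy $F(x^* )=0$. Let $v\in\mathbb{R}^n_+$ be a sampling vector (random, $\mathbb{E}[v_i]=1$ for all $i$) and $g(x)=F_v(x):=\frac1n\sum_{i=1}^n v_iF_i(x)$. Then the Expected Residual condition holds, i.e. there is $\delta$ with $$\mathbb{E}\big\|(g(x)-g(x^* ))-(F(x)-F(x^* ))\big\|^2\le\frac{\delta}{2}\|x-x^*\|^2\quad\forall x\in\mathbb{R}^d.$$ If, in addition, $n\ge 2$ and $v$ is a $\tau$-minibatch sampling for some $\tau\in\{1,\dots,n\}$, then this holds with $$\delta=\frac{2}{n\tau}\,\frac{n-\tau}{n-1}\sum_{i=1}^nL_i^2,\qquad\text{and}\qquad \sigma_*^2:=\mathbb{E}\|g(x^* )\|^2=\frac{1}{n\tau}\,\frac{n-\tau}{n-1}\sum_{i=1}^n\|F_i(x^* )\|^2 .$$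
   Context: A $\tau$-minibatch sampling is the random vector $v\in\mathbb{R}^n$ such that for every subset $S\subseteq\{1,\dots,n\}$ with $|S|=\tau$, $\Pr\big[v=\frac{n}{\tau}\sum_{i\in S}e_i\big]=1/\binom{n}{\tau}$ (it satisfies $\mathbb{E}[v_i]=1$). $L_i$-Lipschitz means $\|F_i(x)-F_i(y)\|\le L_i\|x-y\|$ for all $x,y$. For general sampling vectors $v$ the first claim is meant for $v$ with finite second moments $\mathbb{E}[v_i^2]<\infty$. *)

From HB Require Import structures.
From mathcomp Require Import all_boot all_order all_algebra.
From mathcomp Require Import all_classical all_reals all_analysis.
Set Implicit Arguments. Unset Strict Implicit. Unset Printing Implicit Defensive.
Import Order.TTheory GRing.Theory Num.Theory.
Local Open Scope ring_scope.
Local Open Scope classical_set_scope.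

Definition sqnorm (R : realType) (dim : nat) (x : 'rV[R]_dim) : R :=
  \sum_(j < dim) x ord0 j ^+ 2.

Definition enorm (R : realType) (dim : nat) (x : 'rV[R]_dim) : R :=
  Num.sqrt (sqnorm x).

Definition is_lipschitz (R : realType) (dim : nat) (F : 'rV[R]_dim -> 'rV[R]_dim)
  (L : R) : Prop :=
  forall x y, enorm (F x - F y) <= L * enorm (x - y).

Definition Fmean (R : realType) (dim n : nat)
  (F : 'I_n -> 'rV[R]_dim -> 'rV[R]_dim) (x : 'rV[R]_dim) : 'rV[R]_dim :=
  n%:R^-1 *: \sum_(i < n) F i x.

Definition Fv (R : realType) (dim n : nat)
  (F : 'I_n -> 'rV[R]_dim -> 'rV[R]_dim) (v : 'I_n -> R) (x : 'rV[R]_dim)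
  : 'rV[R]_dim :=
  n%:R^-1 *: \sum_(i < n) v i *: F i x.

Definition minibatch_sampling (dsp : measure_display) (T : measurableType dsp)
  (R : realType) (P : probability T R) (n : nat) (v : 'I_n -> T -> R)
  (tau : nat) : Prop :=
  forall S : {set 'I_n}, #|S| = tau ->
    P [set w : T | forall i : 'I_n, v i w = (if i \in S then n%:R / tau%:R else 0)]
    = ((('C(n, tau))%:R : R)^-1)%:E.

From HB Require Import structures.
From mathcomp Require Import all_boot all_order all_algebra.
From mathcomp Require Import all_classical all_reals all_analysis.
From mathcomp Require Import ring lra.
Set Implicit Arguments. Unset Strict Implicit. Unset Printing Implicit Defensive.
Import Order.TTheory GRing.Theory Num.Theory.
Import measurable_realfun.
Local Open Scope ring_scope.

(* The residual (F_v x - F_v xs) - (F x - F xs) equals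
   sum_i n^-1 (v_i - 1) (F_i x - F_i xs).  For any nonnegative sampling vector,
   Cauchy-Schwarz and the Lipschitz bounds dominate its squared norm by
   n^-1 sum_i L_i^2 (v_i^2 + 1) |x - xs|^2, whose expectation is finite.
   A tau-minibatch sampling takes each of the C(n, tau) values (n/tau) 1_S with
   equal probability; counting the batches that avoid one or two given indices gives
   sum_S (v_i - 1)(v_j - 1) = C(n, tau) kappa (n [i = j] - 1), where
   kappa = (n - tau) / (tau (n - 1)).  Hence
   E |sum_i n^-1 (v_i - 1) a_i|^2 = kappa n^-2 (n sum_i |a_i|^2 - |sum_i a_i|^2),
   which yields the residual bound (drop the last term) and sigma_*^2
   (there sum_i F_i xs = 0). *)

Section RowNorm.
Variables (R : realType) (dim : nat).
Implicit Types (x y : 'rV[R]_dim).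

Definition dotr x y : R := \sum_(j < dim) x ord0 j * y ord0 j.

Lemma sqnorm_dotr x : sqnorm x = dotr x x.
Proof. by apply: eq_bigr => j _; rewrite expr2. Qed.

Lemma sqnorm_ge0 x : 0 <= sqnorm x.
Proof. by apply: sumr_ge0 => j _; exact: sqr_ge0. Qed.

Lemma sqnorm0 : sqnorm (0 : 'rV[R]_dim) = 0.
Proof. by rewrite /sqnorm big1 // => j _; rewrite mxE expr0n. Qed.

Lemma sqnormZ (a : R) x : sqnorm (a *: x) = a ^+ 2 * sqnorm x.
Proof. by rewrite /sqnorm mulr_sumr; apply: eq_bigr => j _; rewrite mxE exprMn. Qed.

Lemma sqnormB x y : sqnorm (x - y) = sqnorm x + sqnorm y - 2 * dotr x y.
Proof.
rewrite /sqnorm /dotr mulr_sumr -big_split -sumrB /=.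
by apply: eq_bigr => j _; rewrite !mxE; ring.
Qed.

Lemma sqnorm_sumZ n (c : 'I_n -> R) (a : 'I_n -> 'rV[R]_dim) :
  sqnorm (\sum_i c i *: a i) = \sum_i \sum_j c i * c j * dotr (a i) (a j).
Proof.
rewrite /sqnorm /dotr; under eq_bigr => k _ do rewrite summxE expr2 big_distrlr /=.
rewrite exchange_big /=; apply: eq_bigr => i _.
rewrite exchange_big /=; apply: eq_bigr => j _.
rewrite mulr_sumr; apply: eq_bigr => k _; rewrite !mxE; ring.
Qed.

Lemma sqnorm_sum n (a : 'I_n -> 'rV[R]_dim) :
  sqnorm (\sum_i a i) = \sum_i \sum_j dotr (a i) (a j).
Proof.
have -> : \sum_i a i = \sum_i 1 *: a i by apply: eq_bigr => i _; rewrite scale1r.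
by rewrite sqnorm_sumZ; apply: eq_bigr => i _; apply: eq_bigr => j _; rewrite !mul1r.
Qed.

Lemma sum_sqnormB n (a : 'I_n -> 'rV[R]_dim) :
  \sum_i \sum_j sqnorm (a i - a j)
  = 2 * (n%:R * \sum_i sqnorm (a i) - sqnorm (\sum_i a i)).
Proof.
under eq_bigr do under eq_bigr do rewrite sqnormB.
under eq_bigr do rewrite sumrB big_split /= sumr_const card_ord -mulr_sumr.
rewrite sumrB big_split /= sumr_const card_ord -mulr_sumr sqnorm_sum.
rewrite sumrMnl; set Q := \sum_i sqnorm (a i).
by rewrite -mulr_natl; ring.
Qed.

Lemma sqnorm_sum_le n (a : 'I_n -> 'rV[R]_dim) :
  sqnorm (\sum_i a i) <= n%:R * \sum_i sqnorm (a i).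
Proof.
rewrite -subr_ge0 -(@pmulr_rge0 _ 2) // -sum_sqnormB.
by do 2!(apply: sumr_ge0 => ? _); exact: sqnorm_ge0.
Qed.

Lemma sqnorm_lipschitz (G : 'rV[R]_dim -> 'rV[R]_dim) (L : R) x y :
  is_lipschitz G L -> sqnorm (G x - G y) <= L ^+ 2 * sqnorm (x - y).
Proof.
move=> /(_ x y) GL.
rewrite -[sqnorm (G x - G y)]sqr_sqrtr ?sqnorm_ge0 //.
rewrite -[sqnorm (x - y)]sqr_sqrtr ?sqnorm_ge0 // -exprMn.
by rewrite lerXn2r ?nnegrE ?sqrtr_ge0 //; exact: le_trans (sqrtr_ge0 _) GL.
Qed.

End RowNorm.

Section Residual.
Variables (R : realType) (dim n : nat) (F : 'I_n -> 'rV[R]_dim -> 'rV[R]_dim).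

Lemma Fv_sub_Fmean (c : 'I_n -> R) x :
  Fv F c x - Fmean F x = \sum_i (n%:R^-1 * (c i - 1)) *: F i x.
Proof.
rewrite /Fv /Fmean -scalerBr -sumrB scaler_sumr; apply: eq_bigr => i _.
by rewrite -scalerA scalerBl scale1r.
Qed.

Lemma Fv_residualE (c : 'I_n -> R) x y :
  Fv F c x - Fv F c y - (Fmean F x - Fmean F y)
  = \sum_i (n%:R^-1 * (c i - 1)) *: (F i x - F i y).
Proof.
rewrite /Fv /Fmean -!scalerBr -!sumrB scaler_sumr; apply: eq_bigr => i _.
by rewrite -scalerA scalerBl scale1r !scalerBr.
Qed.

End Residual.

Lemma sum_draws_subset (R : pzSemiRingType) (T : finType) (B : {set T}) k :
  \sum_(S : {set T} | #|S| == k) ((S \subset B)%:R : R) = 'C(#|B|, k)%:R.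
Proof.
rewrite -cards_draws -sum1_card natr_sum big_mkcond [RHS]big_mkcond /=.
by apply: eq_bigr => S _; rewrite inE andbC; case: (_ == k); case: (_ \subset _).
Qed.

Lemma sum1_draws (R : pzSemiRingType) (T : finType) k :
  \sum_(S : {set T} | #|S| == k) (1 : R) = 'C(#|T|, k)%:R.
Proof.
rewrite -cardsT -sum_draws_subset.
by apply: eq_bigr => S _; rewrite finset.subsetT.
Qed.

Lemma mulr_bin_down (R : pzRingType) n k :
  n%:R * 'C(n.-1, k)%:R = (n%:R - k%:R) * 'C(n, k)%:R :> R.
Proof.
have [kn | nk] := leqP k n; first by rewrite -natrB // -!natrM mul_bin_down.
by rewrite !bin_small ?mulr0 // (leq_ltn_trans (leq_pred n)).
Qed.

Section MinibatchSums.
Variables (R : realType) (n tau : nat).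
Hypotheses (n_ge2 : (2 <= n)%N) (tau_gt0 : (0 < tau)%N).

Definition minibatch_value (S : {set 'I_n}) (i : 'I_n) : R :=
  if i \in S then n%:R / tau%:R else 0.

Lemma minibatch_value_inj : injective minibatch_value.
Proof.
have c0 : (n%:R / tau%:R : R) != 0.
  by rewrite mulf_neq0 ?invr_eq0 // pnatr_eq0 -lt0n // (ltn_trans _ n_ge2).
move=> S S' /(congr1 (fun f => f _)) eqSS'; apply/setP => k.
move: (eqSS' k); rewrite /minibatch_value.
by case: (k \in S); case: (k \in S') => // /eqP; rewrite ?(negbTE c0) // eq_sym (negbTE c0).
Qed.

Let kappa : R := (n%:R - tau%:R) / (tau%:R * (n%:R - 1)).

Lemma sum_minibatch_cov (i j : 'I_n) :
  \sum_(S : {set 'I_n} | #|S| == tau)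
     (minibatch_value S i - 1) * (minibatch_value S j - 1)
  = 'C(n, tau)%:R * kappa * (n%:R * (i == j)%:R - 1).
Proof.
set c : R := n%:R / tau%:R.
set N1 : R := 'C(n.-1, tau)%:R.
have notin_i (k : 'I_n) (S : {set 'I_n}) : (S \subset [set~ k]) = (k \notin S).
  by rewrite finset.subsetC finset.sub1set !inE.
have notin_ij (S : {set 'I_n}) : (S \subset ~: [set i; j]) = (i \notin S) && (j \notin S).
  by rewrite finset.subsetC finset.subUset !finset.sub1set !inE.
have termE (S : {set 'I_n}) : (minibatch_value S i - 1) * (minibatch_value S j - 1)
    = (c - 1) ^+ 2 * 1 - c * (c - 1) * (S \subset [set~ i])%:R
      - c * (c - 1) * (S \subset [set~ j])%:R + c ^+ 2 * (S \subset ~: [set i; j])%:R.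
  by rewrite notin_ij !notin_i /minibatch_value -/c; case: (i \in S); case: (j \in S) => /=; ring.
have count1 (k : 'I_n) : \sum_(S : {set 'I_n} | #|S| == tau) ((S \subset [set~ k])%:R : R) = N1.
  by rewrite sum_draws_subset cardsC1 card_ord.
rewrite (eq_bigr _ (fun S _ => termE S)) big_split !sumrB -!mulr_sumr sum1_draws card_ord !count1.
rewrite sum_draws_subset cardsCs finset.setCK card_ord /=.
have n0 : (n%:R : R) != 0 by rewrite pnatr_eq0 -lt0n (ltn_trans _ n_ge2).
have t0 : (tau%:R : R) != 0 by rewrite pnatr_eq0 -lt0n.
have n1E : (n.-1%:R : R) = n%:R - 1 by rewrite -subn1 natrB // (ltnW n_ge2).
have n10 : (n%:R - 1 : R) != 0 by rewrite -n1E pnatr_eq0 -lt0n -subn1 subn_gt0.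
have N1E : N1 = (n%:R - tau%:R) * 'C(n, tau)%:R / n%:R.
  by rewrite -mulr_bin_down mulrAC mulfV ?mul1r.
have [<-|ij] := eqVneq i j.
  rewrite finset.setUid cards1 subn1 -/N1 mulr1 N1E /kappa /c.
  by field; rewrite n0 t0 n10.
have N2E : 'C(n.-2, tau)%:R = (n%:R - 1 - tau%:R) * N1 / (n%:R - 1) :> R.
  by rewrite -n1E -mulr_bin_down mulrAC mulfV ?mul1r // n1E.
rewrite cards2 ij subn2 N2E N1E mulr0 /kappa /c.
by field; rewrite n0 t0 n10.
Qed.

Lemma sum_minibatch_sqnorm dim (a : 'I_n -> 'rV[R]_dim) :
  \sum_(S : {set 'I_n} | #|S| == tau)
     sqnorm (\sum_i (n%:R^-1 * (minibatch_value S i - 1)) *: a i)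
  = 'C(n, tau)%:R * kappa / n%:R ^+ 2
    * (n%:R * \sum_i sqnorm (a i) - sqnorm (\sum_i a i)).
Proof.
set K := 'C(n, tau)%:R * kappa / n%:R ^+ 2.
under eq_bigr do rewrite sqnorm_sumZ.
rewrite exchange_big /=; under eq_bigr do rewrite exchange_big /=.
transitivity (\sum_i \sum_j K * dotr (a i) (a j) * (n%:R * (i == j)%:R - 1)).
  apply: eq_bigr => i _; apply: eq_bigr => j _.
  transitivity (dotr (a i) (a j) / n%:R ^+ 2 * \sum_(S : {set 'I_n} | #|S| == tau)
                  (minibatch_value S i - 1) * (minibatch_value S j - 1)).
    by rewrite mulr_sumr; apply: eq_bigr => S _; rewrite -exprVn; ring.
  by rewrite sum_minibatch_cov /K; ring.
rewrite sqnorm_sum mulrBr !mulr_sumr -sumrB; apply: eq_bigr => i _.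
rewrite sqnorm_dotr; under eq_bigr => j _ do rewrite mulrBr mulr1.
rewrite sumrB (bigD1 i) //= eqxx big1 => [|j /negbTE ji]; last by rewrite eq_sym ji !mulr0.
by rewrite addr0 mulr1 -mulrA [_ * n%:R]mulrC; congr (_ - _); rewrite mulr_sumr.
Qed.

End MinibatchSums.

Local Open Scope classical_set_scope.

Section PiecewiseConstantIntegral.
Context d (T : measurableType d) (R : realType) (P : probability T R).
Context (I : eqType) (s : seq I) (E : I -> set T).
Hypotheses (mE : forall k, measurable (E k)) (s_uniq : uniq s)
  (E_triv : trivIset [set` s] E) (PE1 : (\sum_(k <- s) P (E k) = 1)%E).

Let D := \big[setU/set0]_(k <- s) E k.

Let mD : measurable D.
Proof. by apply: bigsetU_measurable => k _; exact: mE. Qed.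

Let integral_cover (f : T -> \bar R) (y : I -> \bar R) :
  measurable_fun setT f -> (forall x, (0 <= f x)%E) ->
  (forall k x, k \in s -> E k x -> f x = y k) ->
  (\int[P]_(x in D) f x = \sum_(k <- s) y k * P (E k))%E.
Proof.
move=> mf f0 fE; rewrite ge0_integral_bigsetU //; last exact: measurable_funS mf.
rewrite big_seq_cond [RHS]big_seq_cond; apply: eq_bigr => k /andP[ks _].
rewrite -integral_cst //; apply: eq_integral => x; rewrite inE => Ex.
exact: fE.
Qed.

Let PD1 : P D = 1%E.
Proof.
rewrite -[P D]mul1e -integral_cst // (@integral_cover (cst 1%E) (fun=> 1%E)) //.
by under eq_bigr do rewrite mul1e.
Qed.

Lemma ge0_integral_piecewise_cst (f : T -> \bar R) (y : I -> \bar R) :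
  measurable_fun setT f -> (forall x, (0 <= f x)%E) ->
  (forall k x, k \in s -> E k x -> f x = y k) ->
  (\int[P]_x f x = \sum_(k <- s) y k * P (E k))%E.
Proof.
move=> mf f0 fE.
have PDC0 : P (~` D) = 0%E by rewrite probability_setC // PD1 subee.
rewrite -(setUv D) ge0_integral_setU //; last 3 first.
- exact: measurableC.
- by rewrite setUv.
- by rewrite disj_set2E; apply/eqP; exact: setICr.
rewrite (@null_set_integral _ _ _ P (~` D)) ?adde0; last 3 first.
- exact: measurableC.
- exact: measurable_funS mf.
- exact: PDC0.
exact: integral_cover.
Qed.

End PiecewiseConstantIntegral.

Section MinibatchExpectation.
Context d (T : measurableType d) (R : realType) (P : probability T R).
Variables (n tau : nat) (v : 'I_n -> T -> R).
Hypotheses (n_ge2 : (2 <= n)%N) (tau_gt0 : (0 < tau)%N) (tau_le_n : (tau <= n)%N).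
Hypotheses (mv : forall i, measurable_fun setT (v i)) (vP : minibatch_sampling P v tau).

Let E (S : {set 'I_n}) := [set w | forall i, v i w = minibatch_value R tau S i].

Let mE S : measurable (E S).
Proof.
have -> : E S = \bigcap_(i in setT) (v i @^-1` [set minibatch_value R tau S i]).
  by apply/seteqP; split => [w ES i _|w ES i]; [exact: ES | exact: ES].
apply: fin_bigcap_measurable => [|i _]; first exact: finite_finset.
by rewrite -[X in measurable X]setTI; exact: mv.
Qed.

Lemma minibatch_expectation (h : ('I_n -> R) -> R) :
  measurable_fun setT (fun w => h (fun i => v i w)) -> (forall c, 0 <= h c) ->
  (\int[P]_w (h (fun i => v i w))%:E
    = ('C(n, tau)%:R^-1
      * \sum_(S : {set 'I_n} | #|S| == tau) h (minibatch_value R tau S))%:E)%E.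
Proof.
move=> mh h0.
have PE (S : {set 'I_n}) : #|S| == tau -> P (E S) = ('C(n, tau)%:R^-1)%:E.
  by move=> /eqP; exact: vP.
rewrite (@ge0_integral_piecewise_cst _ _ _ P _
  [seq S : {set 'I_n} <- index_enum {set 'I_n} | #|S| == tau] E _ _ _ _ _
  (fun S => (h (minibatch_value R tau S))%:E)).
- rewrite big_filter (eq_bigr _ (fun S cS => congr1 _ (PE S cS))) sumEFin.
  by congr _%:E; rewrite mulrC mulr_suml.
- exact: mE.
- by rewrite filter_uniq // index_enum_uniq.
- move=> S S' _ _ [w [ES ES']]; apply: (@minibatch_value_inj R _ _ n_ge2 tau_gt0).
  by apply/funext => i; rewrite -(ES i) -(ES' i).
- rewrite big_filter (eq_bigr _ PE) sumEFin.
  under eq_bigr do rewrite -[_^-1]mulr1.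
  by rewrite -mulr_sumr sum1_draws card_ord mulVf // pnatr_eq0 -lt0n bin_gt0.
- exact/measurable_EFinP.
- by move=> w; rewrite lee_fin.
- by move=> S w _ ES; congr _%:E; congr h; apply/funext => i; exact: ES.
Qed.

End MinibatchExpectation.

Lemma measurable_sqnorm_sumZ d (T : measurableType d) (R : realType) dim n
    (c : 'I_n -> T -> R) (a : 'I_n -> 'rV[R]_dim) :
  (forall i, measurable_fun setT (c i)) ->
  measurable_fun setT (fun w => sqnorm (\sum_i c i w *: a i)).
Proof.
move=> mc; under eq_fun do rewrite sqnorm_sumZ.
apply: measurable_sum => i; apply: measurable_sum => j.
by apply: measurable_funM => //; exact: measurable_funM.
Qed.

Lemma ge0_integral_sumZ d (T : measurableType d) (R : realType) (mu : measure T R)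
    (I : Type) (s : seq I) (a : I -> R) (f : I -> T -> R) :
  (forall k, 0 <= a k) -> (forall k, measurable_fun setT (f k)) ->
  (forall k x, 0 <= f k x) ->
  (\int[mu]_x (\sum_(k <- s) a k * f k x)%:E
   = \sum_(k <- s) (a k)%:E * \int[mu]_x (f k x)%:E)%E.
Proof.
move=> a0 mf f0; under eq_integral do rewrite -sumEFin.
rewrite ge0_integral_sum //; last 2 first.
- by move=> k; apply/measurable_EFinP; exact: measurable_funM.
- by move=> k x _; rewrite lee_fin mulr_ge0.
apply: eq_bigr => k _; under eq_integral do rewrite EFinM.
by rewrite ge0_integralZl_EFin //; [move=> x _; rewrite lee_fin | exact/measurable_EFinP].
Qed.

Section ExpectedResidual.
Context d (T : measurableType d) (R : realType) (P : probability T R).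
Variables (dim n : nat) (F : 'I_n -> 'rV[R]_dim -> 'rV[R]_dim) (L : 'I_n -> R).
Variable v : 'I_n -> T -> R.
Hypothesis FL : forall i, is_lipschitz (F i) (L i).
Hypotheses (mv : forall i, measurable_fun setT (v i)) (v_ge0 : forall i w, 0 <= v i w).
Hypothesis v2_int : forall i, P.-integrable setT (fun w => (v i w ^+ 2)%:E).

Let m2 i := fine (\int[P]_w (v i w ^+ 2)%:E)%E.

Let integral_sqr_add1 i : (\int[P]_w (v i w ^+ 2 + 1)%:E = (m2 i + 1)%:E)%E.
Proof.
under eq_integral do rewrite EFinD.
rewrite ge0_integralD //; last 2 first.
- by move=> w _; rewrite lee_fin sqr_ge0.
- exact/measurable_EFinP/measurable_funX.
rewrite integral_cst // mul1e /m2 EFinD fineK ?integrable_fin_num //.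
by congr (_ + _)%E; exact: probability_setT.
Qed.

Lemma expected_residual_le x y :
  (\int[P]_w (sqnorm (Fv F (fun i => v i w) x - Fv F (fun i => v i w) y
                      - (Fmean F x - Fmean F y)))%:E
   <= ((n%:R^-1 * \sum_i L i ^+ 2 * (m2 i + 1)) * sqnorm (x - y))%:E)%E.
Proof.
pose a i := n%:R^-1 * (L i ^+ 2 * sqnorm (x - y)).
have a_ge0 i : 0 <= a i by rewrite mulr_ge0 ?invr_ge0 // mulr_ge0 ?sqr_ge0 ?sqnorm_ge0.
under eq_integral do rewrite Fv_residualE.
apply: (@le_trans _ _ (\int[P]_w (\sum_i a i * (v i w ^+ 2 + 1))%:E)%E).
  apply: ge0_le_integral => //.
  - by move=> w _; rewrite lee_fin sqnorm_ge0.
  - apply/measurable_EFinP/measurable_sqnorm_sumZ => i.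
    by apply: measurable_funM => //; apply: measurable_funB.
  - apply/measurable_EFinP/measurable_sum => i; apply: measurable_funM => //.
    exact: measurable_funD (measurable_funX _ (mv i)) (measurable_cst _).
  move=> w _; rewrite lee_fin; apply: le_trans (sqnorm_sum_le _) _.
  rewrite mulr_sumr; apply: ler_sum => i _.
  have n_gt0 : (0 < n)%N by apply: leq_ltn_trans (ltn_ord i).
  have n0 : (n%:R : R) != 0 by rewrite pnatr_eq0 -lt0n.
  rewrite sqnormZ (_ : n%:R * _ = n%:R^-1 * ((v i w - 1) ^+ 2 * sqnorm (F i x - F i y)));
    last by field.
  rewrite /a -mulrA ler_wpM2l ?invr_ge0 // [_ * sqnorm _]mulrC.
  apply: ler_pM; rewrite ?sqr_ge0 ?sqnorm_ge0 ?sqnorm_lipschitz //.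
  by have := v_ge0 i w; nra.
rewrite ge0_integral_sumZ //; last 2 first.
- by move=> i; exact: measurable_funD (measurable_funX _ (mv i)) (measurable_cst _).
- by move=> i w; rewrite addr_ge0 // sqr_ge0.
under eq_bigr do rewrite integral_sqr_add1 -EFinM.
rewrite sumEFin lee_fin [leRHS](_ : _ = \sum_i a i * (m2 i + 1)) //.
by rewrite mulrAC mulr_sumr; apply: eq_bigr => i _; rewrite /a; ring.
Qed.

End ExpectedResidual.

Section MinibatchResidual.
Context d (T : measurableType d) (R : realType) (P : probability T R).
Variables (dim n tau : nat) (F : 'I_n -> 'rV[R]_dim -> 'rV[R]_dim) (v : 'I_n -> T -> R).
Hypotheses (n_ge2 : (2 <= n)%N) (tau_gt0 : (0 < tau)%N) (tau_le_n : (tau <= n)%N).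
Hypotheses (mv : forall i, measurable_fun setT (v i)) (vP : minibatch_sampling P v tau).

Let kappa : R := (n%:R - tau%:R) / (tau%:R * (n%:R - 1)).

Let n0 : (n%:R : R) != 0.
Proof. by rewrite pnatr_eq0 -lt0n (ltn_trans _ n_ge2). Qed.

Let kappa_ge0 : 0 <= kappa.
Proof.
rewrite divr_ge0 ?mulr_ge0 ?subr_ge0 ?ler_nat // ?(ltnW n_ge2) //.
by rewrite ler1n (ltn_trans _ n_ge2).
Qed.

Lemma minibatch_expected_sqnorm (a : 'I_n -> 'rV[R]_dim) :
  (\int[P]_w (sqnorm (\sum_i (n%:R^-1 * (v i w - 1)) *: a i))%:E
   = (kappa / n%:R ^+ 2 * (n%:R * \sum_i sqnorm (a i) - sqnorm (\sum_i a i)))%:E)%E.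
Proof.
rewrite (@minibatch_expectation _ _ _ P n tau v n_ge2 tau_gt0 tau_le_n mv vP
  (fun c => sqnorm (\sum_i (n%:R^-1 * (c i - 1)) *: a i))); last 2 first.
- apply: measurable_sqnorm_sumZ => i.
  by apply: measurable_funM => //; apply: measurable_funB.
- by move=> c; exact: sqnorm_ge0.
rewrite sum_minibatch_sqnorm // !mulrA mulVf ?mul1r // pnatr_eq0 -lt0n bin_gt0.
exact: tau_le_n.
Qed.

Lemma minibatch_expected_residual_le (L : 'I_n -> R) x y :
  (forall i, is_lipschitz (F i) (L i)) ->
  (\int[P]_w (sqnorm (Fv F (fun i => v i w) x - Fv F (fun i => v i w) y
                      - (Fmean F x - Fmean F y)))%:E
   <= (kappa / n%:R * \sum_i L i ^+ 2 * sqnorm (x - y))%:E)%E.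
Proof.
move=> FL; under eq_integral do rewrite Fv_residualE.
rewrite minibatch_expected_sqnorm lee_fin.
apply: (@le_trans _ _ (kappa / n%:R * \sum_i sqnorm (F i x - F i y))).
  rewrite -subr_ge0 (_ : _ - _ = kappa / n%:R ^+ 2 * sqnorm (\sum_i (F i x - F i y))).
    by rewrite mulr_ge0 ?sqnorm_ge0 // divr_ge0 // exprn_ge0.
  by field.
rewrite ler_wpM2l ?(divr_ge0 kappa_ge0) //; apply: ler_sum => i _.
exact: sqnorm_lipschitz.
Qed.

Lemma minibatch_expected_sqnorm_root xs :
  Fmean F xs = 0 ->
  (\int[P]_w (sqnorm (Fv F (fun i => v i w) xs))%:E
   = (kappa / n%:R * \sum_i sqnorm (F i xs))%:E)%E.
Proof.
move=> Fxs0.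
have sumF0 : \sum_i F i xs = 0.
  by move/eqP: Fxs0; rewrite /Fmean scaler_eq0 invr_eq0 (negbTE n0) => /eqP.
under eq_integral do rewrite -[Fv _ _ xs]subr0 -[X in _ - X]Fxs0 Fv_sub_Fmean.
rewrite minibatch_expected_sqnorm sumF0 sqnorm0 subr0.
by congr _%:E; field.
Qed.

End MinibatchResidual.

Theorem proposition3p3 (R : realType) (dim n : nat)
  (F : 'I_n -> 'rV[R]_dim -> 'rV[R]_dim) (L : 'I_n -> R)
  (xs : 'rV[R]_dim)
  (dsp : measure_display) (T : measurableType dsp) (P : probability T R)
  (v : 'I_n -> T -> R) :
  (forall i, is_lipschitz (F i) (L i)) ->
  Fmean F xs = 0 ->
  (forall i, measurable_fun setT (v i)) ->
  (forall i w, 0 <= v i w) ->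
  (forall i, P.-integrable setT (fun w => (v i w)%:E)) ->
  (forall i, (\int[P]_w (v i w)%:E)%E = 1%E) ->
  (forall i, P.-integrable setT (fun w => (v i w ^+ 2)%:E)) ->
  (exists delta : R, forall x : 'rV[R]_dim,
     (\int[P]_w (sqnorm ((Fv F (fun i => v i w) x - Fv F (fun i => v i w) xs)
                          - (Fmean F x - Fmean F xs)))%:E
      <= (delta / 2 * sqnorm (x - xs))%:E)%E)
  /\
  (forall tau : nat, (2 <= n)%N -> (1 <= tau <= n)%N ->
     minibatch_sampling P v tau ->
     let delta := 2 / (n%:R * tau%:R) * ((n - tau)%:R / (n - 1)%:R)
                  * \sum_(i < n) L i ^+ 2 in
     (forall x : 'rV[R]_dim,
       (\int[P]_w (sqnorm ((Fv F (fun i => v i w) x - Fv F (fun i => v i w) xs)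
                          - (Fmean F x - Fmean F xs)))%:E
        <= (delta / 2 * sqnorm (x - xs))%:E)%E)
     /\
     (\int[P]_w (sqnorm (Fv F (fun i => v i w) xs))%:E)%E
       = (1 / (n%:R * tau%:R) * ((n - tau)%:R / (n - 1)%:R)
          * \sum_(i < n) sqnorm (F i xs))%:E).
Proof.
move=> FL Fxs0 mv v_ge0 _ _ v2_int; split.
  exists (2 * (n%:R^-1 * \sum_i L i ^+ 2 * (fine (\int[P]_w (v i w ^+ 2)%:E)%E + 1))) => x.
  by rewrite [2 * _]mulrC mulfK //; exact: expected_residual_le.
move=> tau n_ge2 /andP[tau_gt0 tau_le_n] vP delta.
have n0 : (n%:R : R) != 0 by rewrite pnatr_eq0 -lt0n (ltn_trans _ n_ge2).
have tau0 : (tau%:R : R) != 0 by rewrite pnatr_eq0 -lt0n.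
have n10 : (n%:R - 1 : R) != 0 by rewrite subr_eq0 pnatr_eq1 gtn_eqF.
rewrite /delta !natrB ?(ltnW n_ge2) //; split.
  move=> x; rewrite (_ : _ / 2 * _ = (n%:R - tau%:R) / (tau%:R * (n%:R - 1)) / n%:R
                                     * \sum_i L i ^+ 2 * sqnorm (x - xs)).
    exact: minibatch_expected_residual_le.
  by rewrite -mulr_suml; set S := \sum_(i < n) L i ^+ 2; field; rewrite n0 tau0 n10.
rewrite (minibatch_expected_sqnorm_root n_ge2 tau_gt0 tau_le_n mv vP Fxs0); congr _%:E.
by set S := \sum_(i < n) sqnorm (F i xs); field; rewrite n0 tau0 n10.
Qed.
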